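(* Let $0<\eta<1/20$ and $K\ge1/\eta$. Let $G$ be a $(1-\eta)$-complete graph on a vertex set $V$ with $|V|=K$, let $W\subseteq V$ satisfy $|W|,|V\setminus W|\ge 4\eta^{1/2}K$, and let $G_W$ be obtained from $G$ by deleting all edges with both endpoints in $W$. Suppose each edge of $G_W$ is coloured red or blue, and let $F$ be a largest monochromatic connected component of $G_W$. Define $W_r=\{w\in W: w \text{ is joined by red edges to all but at most } 3\eta^{1/2}K \text{ vertices of } V\setminus W\}$ and $W_b=\{w\in W: w \text{ is joined by blue edges to all but at most } 3\eta^{1/2}K \text{ vertices of } V\setminus W\}$. Then $|F|\ge(1-2\eta^{1/2})K$ or both $W_r$ and $W_b$ are nonempty.
   Context: A graph on $K$ vertices is $(1-\eta)$-complete if its minimum degree is at least $(1-\eta)(K-1)$. A monochromatic component is a connected component of the subgraph formed by the red edges or of the subgraph formed by the blue edges. *)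

From HB Require Import structures.
From mathcomp Require Import all_boot all_order all_algebra.
Set Implicit Arguments. Unset Strict Implicit. Unset Printing Implicit Defensive.
Import Order.TTheory GRing.Theory Num.Theory.
Local Open Scope ring_scope.

Definition simple_graph (T : finType) (G : rel T) : Prop :=
  irreflexive G /\ symmetric G.

Definition nbhd (T : finType) (G : rel T) (v : T) : {set T} := [set u | G v u].

Definition almost_complete (R : realFieldType) (eta : R) (T : finType) (G : rel T) : Prop :=
  forall v : T, (1 - eta) * ((#|T|)%:R - 1) <= (#|nbhd G v|)%:R.

Definition delete_inside (T : finType) (G : rel T) (W : {set T}) : rel T :=
  [rel u v | G u v && ~~ ((u \in W) && (v \in W))].

(* Edge colouring: col u v = true means red, false means blue (col symmetric).
   colour_rel H col b : the subgraph of H formed by the edges of colour b. *)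
Definition colour_rel (T : finType) (H : rel T) (col : T -> T -> bool) (b : bool) : rel T :=
  [rel u v | H u v && (col u v == b)].

Definition mono_comp (T : finType) (H : rel T) (col : T -> T -> bool) (b : bool) (v : T)
  : {set T} := [set u | connect (colour_rel H col b) v u].

Definition W_col (R : realFieldType) (T : finType) (H : rel T) (col : T -> T -> bool)
  (W : {set T}) (b : bool) (t : R) : {set T} :=
  [set w in W | (#|[set u in ~: W | ~~ colour_rel H col b w u]|)%:R <= t].

(* If no vertex of W sees almost all of V \ W in colour c, then every w in W
   has more than 2 eta K neighbours of the other colour d in V \ W.  Let D be
   the d-component of some w0 in W, and split V \ W into A = D-part and
   B = the rest; |A| > 2 eta K.  If |B| <= eta K, every vertex of W has a
   d-neighbour in A, so D misses at most B.  Otherwise every edge of G_W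
   leaving D has colour c; any two vertices of B have a common neighbour in A,
   every vertex of D has a neighbour in B and every vertex outside D has one
   in A, so a single c-component spans V.  Either way some monochromatic
   component has at least (1 - eta) K >= (1 - 2 sqrt eta) K vertices. *)
From HB Require Import structures.
From mathcomp Require Import all_boot all_order all_algebra.
From mathcomp Require Import lra.
Set Implicit Arguments. Unset Strict Implicit. Unset Printing Implicit Defensive.
Import Order.TTheory GRing.Theory Num.Theory.
Local Open Scope ring_scope.

Section AlmostComplete.
Variables (R : realFieldType) (eta : R) (T : finType) (G : rel T).
Hypotheses (G_irr : irreflexive G) (G_ac : almost_complete eta G).

Let e : R := eta * ((#|T|)%:R - 1).

Lemma card_non_nbhd_in v (S : {set T}) :
  v \notin S -> (#|[set u in S | ~~ G v u]|)%:R <= e.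
Proof.
move=> vS; set N := nbhd G v.
have sub : [set u in S | ~~ G v u] \subset ~: N :\ v.
  apply/subsetP => u; rewrite !inE => /andP[uS ->]; rewrite andbT.
  by apply: contraNneq vS => <-.
have vN : v \in ~: N by rewrite !inE G_irr.
have cardT : (#|T|)%:R = (#|N|)%:R + (#|~: N :\ v|)%:R + 1 :> R.
  by rewrite -(cardsC N) (cardsD1 v (~: N)) vN add1n -addn1 !natrD; lra.
have := G_ac v; rewrite -/N.
move: (subset_leq_card sub); rewrite -(ler_nat R) /e; lra.
Qed.

Lemma exists_nbhd_in v (S : {set T}) :
  v \notin S -> e < (#|S|)%:R -> exists2 u, u \in S & G v u.
Proof.
move=> vS S_gt; apply/exists_inP; apply: contraTT S_gt => /exists_inPn noG.
have : S \subset [set u in S | ~~ G v u] by apply/subsetP => u uS; rewrite inE uS noG.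
move/subset_leq_card; rewrite -(ler_nat R) -leNgt => h.
exact: le_trans h (card_non_nbhd_in vS).
Qed.

Lemma exists_common_nbhd_in v1 v2 (S : {set T}) :
  v1 \notin S -> v2 \notin S -> e + e < (#|S|)%:R ->
  exists2 u, u \in S & G v1 u && G v2 u.
Proof.
move=> v1S v2S S_gt; apply/exists_inP; apply: contraTT S_gt => /exists_inPn noG.
have : S \subset [set u in S | ~~ G v1 u] :|: [set u in S | ~~ G v2 u].
  by apply/subsetP => u uS; move: (noG u uS); rewrite !inE uS negb_and.
move/subset_leq_card/leq_trans/(_ (leq_card_setU _ _)).
rewrite -(ler_nat R) natrD -leNgt => h.
by apply: le_trans h _; apply: lerD; apply: card_non_nbhd_in.
Qed.

End AlmostComplete.

Section MonoComponents.
Variables (T : finType) (H : rel T) (col : T -> T -> bool).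

Lemma mono_comp_refl b v : v \in mono_comp H col b v.
Proof. by rewrite inE connect0. Qed.

Lemma mono_comp_step b v x y :
  x \in mono_comp H col b v -> colour_rel H col b x y -> y \in mono_comp H col b v.
Proof. by rewrite !inE => vx xy; apply: connect_trans vx (connect1 xy). Qed.

Lemma mono_comp_boundary b v x y :
  x \in mono_comp H col b v -> y \notin mono_comp H col b v -> H x y ->
  colour_rel H col (~~ b) x y.
Proof.
move=> xD yD Hxy; rewrite /colour_rel /= Hxy; apply: contraNT yD => nb.
by apply: mono_comp_step xD _; rewrite /colour_rel /= Hxy; case: (col x y) b nb => -[].
Qed.

Lemma colour_rel_sym b :
  symmetric H -> (forall u v, col u v = col v u) -> symmetric (colour_rel H col b).
Proof. by move=> H_sym col_sym x y; rewrite /colour_rel /= H_sym col_sym. Qed.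

End MonoComponents.

Lemma delete_inside_sym (T : finType) (G : rel T) (W : {set T}) :
  symmetric G -> symmetric (delete_inside G W).
Proof. by move=> G_sym x y; rewrite /delete_inside /= G_sym [(x \in W) && _]andbC. Qed.

Lemma delete_inside_out (T : finType) (G : rel T) (W : {set T}) x y :
  (x \notin W) || (y \notin W) -> delete_inside G W x y = G x y.
Proof. by rewrite /delete_inside /= -negb_and => ->; rewrite andbT. Qed.

Section LargeComponent.
Variables (R : realFieldType) (eta : R) (T : finType) (G : rel T) (W : {set T}).
Variables (col : T -> T -> bool) (c : bool) (t : R) (w0 : T).
Hypotheses (G_irr : irreflexive G) (G_sym : symmetric G).
Hypotheses (G_ac : almost_complete eta G) (col_sym : forall u v, col u v = col v u).
Hypotheses (eta_ge0 : 0 <= eta) (w0W : w0 \in W).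

Let K : R := (#|T|)%:R.
Let e : R := eta * (K - 1).
Let H := delete_inside G W.

Hypotheses (W_col_eq0 : W_col H col W c t = set0) (t_ge : 3 * e <= t).

Let H_sym : symmetric H. Proof. exact: delete_inside_sym. Qed.

Let e_ge0 : 0 <= e.
Proof.
have : (0 < #|T|)%N by apply/card_gt0P; exists w0.
by rewrite -(ler1n R) -/K => K_ge1; rewrite /e mulr_ge0 // subr_ge0.
Qed.

Lemma card_other_colour_nbhd w :
  w \in W -> e + e < (#|[set u in ~: W | colour_rel H col (~~ c) w u]|)%:R.
Proof.
move=> wW.
have t_lt : t < (#|[set u in ~: W | ~~ colour_rel H col c w u]|)%:R.
  rewrite ltNge; apply: contraFN (in_set0 w) => le_t.
  by rewrite -W_col_eq0 inE wW.
have sub : [set u in ~: W | ~~ colour_rel H col c w u]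
    \subset [set u in ~: W | ~~ G w u] :|: [set u in ~: W | colour_rel H col (~~ c) w u].
  apply/subsetP => u; rewrite !inE => /andP[uW]; rewrite uW /=.
  rewrite /colour_rel /= /H delete_inside_out ?uW ?orbT //; case: (G w u) => //=.
  by case: (col w u) c => -[].
have := leq_trans (subset_leq_card sub) (leq_card_setU _ _).
rewrite -(ler_nat R) natrD.
have : w \notin ~: W by rewrite inE wW.
move/(card_non_nbhd_in G_irr G_ac); rewrite -/K -/e; move: t_ge; lra.
Qed.

Let D := mono_comp H col (~~ c) w0.
Let A := ~: W :&: D.
Let B := ~: W :\: D.

Lemma card_A_gt : e + e < (#|A|)%:R.
Proof.
apply: lt_le_trans (card_other_colour_nbhd w0W) _; rewrite ler_nat.
apply/subset_leq_card/subsetP => u; rewrite inE => /andP[uW wu].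
rewrite in_setI uW /=.
exact: mono_comp_step (mono_comp_refl _ _ _ _) wu.
Qed.

Lemma mono_comp_large_of_B_small : (#|B|)%:R <= e -> K - e <= (#|D|)%:R.
Proof.
move=> B_le.
have sub : ~: B \subset D.
  apply/subsetP => y; rewrite in_setC in_setD negb_and negbK in_setC negbK.
  case: (boolP (y \in D)) => //= yD yW.
  have : ~~ ([set u in ~: W | colour_rel H col (~~ c) y u] \subset B).
    apply: contraTN (card_other_colour_nbhd yW) => /subset_leq_card.
    by rewrite -(ler_nat R) -leNgt => le_B; move: e_ge0; lra.
  case/subsetPn => u; rewrite inE => /andP[uW yu].
  rewrite in_setD uW andbT negbK => uD.
  suff : y \in D by rewrite (negbTE yD).
  by apply: mono_comp_step uD _; rewrite colour_rel_sym.
rewrite /K -(cardsC B) natrD lerBlDr addrC.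
by apply: lerD => //; rewrite ler_nat subset_leq_card.
Qed.

Lemma D_boundary_colour x y :
  x \in D -> y \notin D -> G x y -> (x \notin W) || (y \notin W) ->
  colour_rel H col c x y.
Proof.
move=> xD yD Gxy xyW; rewrite -[c]negbK.
by apply: mono_comp_boundary xD yD _; rewrite /H delete_inside_out.
Qed.

Lemma mono_comp_spanning_of_B_large :
  e < (#|B|)%:R -> exists v, mono_comp H col c v = setT.
Proof.
move=> B_gt; have [b0 b0B] : exists b0, b0 \in B.
  by apply/set0Pn; apply: contraTneq B_gt => ->; rewrite cards0 -leNgt.
have A_gt := card_A_gt.
have AD u : u \in A -> u \in D by rewrite inE => /andP[].
have AW u : u \in A -> u \notin W by rewrite !inE => /andP[].
have BD u : u \in B -> u \notin D by rewrite inE => /andP[].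
have BW u : u \in B -> u \notin W by rewrite !inE => /andP[].
have B_notA u : u \in B -> u \notin A by move=> uB; apply: contra (BD u uB) => /AD.
have crel_sym := colour_rel_sym c H_sym col_sym.
have reach_B b : b \in B -> connect (colour_rel H col c) b0 b.
  move=> bB; have [a aA /andP[Gb0a Gba]] :=
    exists_common_nbhd_in G_irr G_ac (B_notA _ b0B) (B_notA _ bB) A_gt.
  have edge u : u \in B -> G u a -> colour_rel H col c a u.
    move=> uB Gua; apply: D_boundary_colour (AD a aA) (BD u uB) _ _.
      by rewrite G_sym.
    by rewrite AW.
  apply: (connect_trans (y := a)); apply: connect1; first by rewrite crel_sym edge.
  exact: edge.
have reach_D y : y \in D -> connect (colour_rel H col c) b0 y.
  move=> yD; have yB : y \notin B by rewrite in_setD yD.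
  have [b bB Gyb] := exists_nbhd_in G_irr G_ac yB B_gt.
  apply: connect_trans (reach_B b bB) (connect1 _).
  by rewrite crel_sym (D_boundary_colour yD (BD b bB)) // (BW b bB) orbT.
exists b0; apply/setP => y; rewrite !inE.
case: (boolP (y \in D)) => [/reach_D // | yD].
have yA : y \notin A by rewrite in_setI (negbTE yD) andbF.
have A_gt1 : e < (#|A|)%:R by apply: le_lt_trans A_gt; rewrite lerDl e_ge0.
have [a aA Gya] := exists_nbhd_in G_irr G_ac yA A_gt1.
apply: connect_trans (reach_D a (AD a aA)) (connect1 _).
by apply: D_boundary_colour (AD a aA) yD _ _; rewrite ?(AW a aA) // G_sym.
Qed.

Lemma exists_large_mono_comp :
  exists b v, K - e <= (#|mono_comp H col b v|)%:R.
Proof.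
have [B_le | B_gt] := lerP (#|B|)%:R e.
  by exists (~~ c), w0; apply: mono_comp_large_of_B_small.
have [v spanning] := mono_comp_spanning_of_B_large B_gt.
by exists c, v; rewrite spanning cardsT -/K lerBlDr lerDl e_ge0.
Qed.

End LargeComponent.

Theorem lemma7p18 (R : rcfType) (eta : R) (T : finType) (G : rel T) (W : {set T})
  (col : T -> T -> bool) (v0 : T) (b0 : bool) :
  0 < eta -> eta < 1 / 20 ->
  1 / eta <= (#|T|)%:R ->
  simple_graph G ->
  almost_complete eta G ->
  4 * Num.sqrt eta * (#|T|)%:R <= (#|W|)%:R ->
  4 * Num.sqrt eta * (#|T|)%:R <= (#|~: W|)%:R ->
  (forall u v, col u v = col v u) ->
  (* F = mono_comp (delete_inside G W) col b0 v0 is a largest monochromatic component *)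
  (forall (v : T) (b : bool),
     #|mono_comp (delete_inside G W) col b v| <= #|mono_comp (delete_inside G W) col b0 v0|)%N ->
  (1 - 2 * Num.sqrt eta) * (#|T|)%:R <= (#|mono_comp (delete_inside G W) col b0 v0|)%:R
  \/ (W_col (delete_inside G W) col W true (3 * Num.sqrt eta * (#|T|)%:R) != set0 /\
      W_col (delete_inside G W) col W false (3 * Num.sqrt eta * (#|T|)%:R) != set0).
Proof.
move=> eta_gt0 eta_lt K_ge [G_irr G_sym] G_ac W_ge _ col_sym F_max.
set K := (#|T|)%:R : R; set s := Num.sqrt eta.
have s_gt0 : 0 < s by rewrite sqrtr_gt0.
have ss : s * s = eta by rewrite -expr2 sqr_sqrtr // ltW.
have K_gt0 : 0 < K by apply: lt_le_trans K_ge; rewrite divr_gt0.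
have s_le1 : s <= 1 by rewrite -sqrtr1 ler_sqrt //; lra.
have eta_le_s : eta <= s by rewrite -{1}ss ler_piMr // ltW.
have e_le : eta * (K - 1) <= s * K.
  apply: le_trans (ler_wpM2r (ltW K_gt0) eta_le_s).
  by rewrite ler_pM2l // lerBlDr lerDl.
have K_bound : (1 - 2 * s) * K <= K - eta * (K - 1) by nra.
have [w0 w0W] : exists w0, w0 \in W.
  by apply/set0Pn; rewrite -card_gt0 -(ltr0n R); apply: lt_le_trans W_ge; rewrite !mulr_gt0.
set W_col_at := fun c => W_col (delete_inside G W) col W c (3 * s * K).
have [/andP[-> ->] | ] := boolP ((W_col_at true != set0) && (W_col_at false != set0)).
  by right.
rewrite negb_and !negbK => W_col_eq0; left.
have [c /eqP Wc] : exists c, W_col_at c == set0.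
  by case/orP: W_col_eq0 => ?; [exists true | exists false].
have t_ge : 3 * (eta * (K - 1)) <= 3 * s * K by lra.
have [b [v]] := exists_large_mono_comp G_irr G_sym G_ac col_sym (ltW eta_gt0) w0W Wc t_ge.
by move=> large; apply: le_trans K_bound (le_trans large _); rewrite ler_nat.
Qed.
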